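(* Let $(W,S)$ be a finitely generated Coxeter system, $u,v\in W$ with $u<v$, and $w,g\in[u,v]$. Then: (a) $v_{S(w)\cup S(g)}$ lies in $[u,v]$ and is the least upper bound $w\vee g$ of $w$ and $g$ in $[u,v]$; moreover $S(w\vee g)=S(w)\cup S(g)$. (b) $v_{S(w)\cap S(g)}$ lies in $[u,v]$ and is the greatest lower bound $w\wedge g$ of $w$ and $g$ in $[u,v]$; moreover $S(w\wedge g)\subseteq S(w)\cap S(g)$.
   Context: $(W,S)$ is a finitely generated Coxeter system with length function $\ell$. For $w\in W$, $S(w)\subseteq S$ is the set of simple reflections appearing in a (any) reduced expression of $w$. For $I\subseteq S$, $W_I$ is the parabolic subgroup generated by $I$, $X_I=\{u\in W:\ell(us)>\ell(u)\ \forall s\in I\}$, and every $w\in W$ factors uniquely as $w=w^Iw_I$ with $w^I\in X_I$, $w_I\in W_I$ (parabolic components along $I$). The partial order on $W$: $u\le v$ iff $v_{S(u)}=u$; $[u,v]=\{w:u\le w\le v\}$. *)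

From mathcomp Require Import all_boot.
From mathcomp Require Import boolp.
Set Implicit Arguments. Unset Strict Implicit. Unset Printing Implicit Defensive.

Definition is_group (H : Type) (mul : H -> H -> H) (one : H) (inv : H -> H) :=
  [/\ forall x y z, mul x (mul y z) = mul (mul x y) z,
      forall x, mul one x = x & forall x, mul (inv x) x = one].

Fixpoint gpow (H : Type) (mul : H -> H -> H) (one : H) (x : H) (k : nat) : H :=
  if k is k'.+1 then mul x (gpow mul one x k') else one.

(* A finitely generated Coxeter system (W,S): S = {gen i | i : 'I_rank} is a
   finite set of distinct non-trivial involutions generating W, and W has the
   presentation < S | s^2 = 1, (st)^(m(s,t)) = 1 > where m(s,t) is the order of
   st (no relation when infinite): stated via the universal property of the
   presentation, i.e. every map f of S into a group respecting all the relations
   s^2 = 1 and (st)^k = 1 that hold in W extends to a group homomorphism. *)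
Record coxsys := CoxSys {
  cW :> Type;
  cmul : cW -> cW -> cW;
  cone : cW;
  cinv : cW -> cW;
  cgroup : is_group cmul cone cinv;
  rank : nat;
  gen : 'I_rank -> cW;
  gen_inj : injective gen;
  gen_neq1 : forall i, gen i <> cone;
  gen_invol : forall i, cmul (gen i) (gen i) = cone;
  gen_generates : forall w : cW, exists s : seq 'I_rank,
      foldr (fun i acc => cmul (gen i) acc) cone s = w;
  presentation : forall (H : Type) (hmul : H -> H -> H) (hone : H) (hinv : H -> H),
      is_group hmul hone hinv ->
      forall f : 'I_rank -> H,
        (forall i, hmul (f i) (f i) = hone) ->
        (forall i j k, gpow cmul cone (cmul (gen i) (gen j)) k = cone ->
                       gpow hmul hone (hmul (f i) (f j)) k = hone) ->
        exists phi : cW -> H,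
          (forall x y, phi (cmul x y) = hmul (phi x) (phi y)) /\
          (forall i, phi (gen i) = f i)
}.

Section Coxeter.
Variable C : coxsys.
Local Notation W := (cW C).
Local Notation n := (rank C).
Local Notation "x * y" := (cmul x y).

Definition ev (s : seq 'I_n) : W := foldr (fun i acc => gen i * acc) (cone C) s.

Lemma ex_len_ex (w : W) : exists k, `[< exists s, size s = k /\ ev s = w >].
Proof.
have [s Hs] := gen_generates w.
by exists (size s); apply/asboolP; exists s.
Qed.

Definition clen (w : W) : nat := ex_minn (ex_len_ex w).

Definition reduced_expr (s : seq 'I_n) (w : W) := ev s = w /\ size s = clen w.

Definition supp (w : W) : {set 'I_n} :=
  [set i | `[< exists s, reduced_expr s w /\ i \in s >]].

Definition inWI (I : {set 'I_n}) (w : W) :=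
  exists s : seq 'I_n, all (fun i => i \in I) s /\ ev s = w.

Definition inXI (I : {set 'I_n}) (u : W) :=
  forall i, i \in I -> clen u < clen (u * gen i).

(* x is the parabolic component w_I : w = w^I w_I with w^I in X_I, w_I in W_I *)
Definition is_par_comp (I : {set 'I_n}) (w x : W) :=
  inWI I x /\ inXI I (w * cinv x).

(* w_I (the factorization exists and is unique; w itself if none, never used) *)
Definition par_comp (I : {set 'I_n}) (w : W) : W :=
  match pselect (exists x, is_par_comp I w x) with
  | left H => projT1 (cid H)
  | right _ => w
  end.

Definition cle (u v : W) := par_comp (supp u) v = u.
Definition clt (u v : W) := cle u v /\ u <> v.

Definition in_interval (u v w : W) := cle u w /\ cle w v.

Definition is_lub_in (u v w g x : W) :=
  [/\ in_interval u v x, cle w x, cle g x &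
      forall y, in_interval u v y -> cle w y -> cle g y -> cle x y].

Definition is_glb_in (u v w g x : W) :=
  [/\ in_interval u v x, cle x w, cle x g &
      forall y, in_interval u v y -> cle y w -> cle y g -> cle y x].

End Coxeter.

(* The order u <= v, i.e. v_{S(u)} = u, is controlled by two facts on parabolic
   components: (v_J)_I = v_I when I is included in J, and S(v_I) is included in
   both I and S(v).  Consequently v_I <= v for every I, an element y <= v equals
   v_{S(y)}, and for x, y <= v we have x <= y iff S(x) is included in S(y).  In
   [u, v] the join of w and g is then v_{S(w) u S(g)} and the meet
   v_{S(w) n S(g)}, both read off from supports.  The two facts follow from
   l(xy) = l(x) + l(y) for x in X_I and y in W_I, which rests on the exchange
   condition.  As W is only known through its presentation, the exchange
   condition comes from Tits' reflection cocycle: s |-> (s, {s}) extends to a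
   morphism from W to the semidirect product of W with its power set, and if t
   lies in the second component N(w), then tw is the value of a proper subword
   of any word for w. *)

From HB Require Import structures.
From mathcomp Require Import all_boot boolp zify.
Set Implicit Arguments. Unset Strict Implicit. Unset Printing Implicit Defensive.

Section IsGroupTheory.
Variables (G : Type) (mul : G -> G -> G) (one : G) (inv : G -> G).
Hypothesis Ggroup : is_group mul one inv.

Lemma is_group_mulgA : associative mul. Proof. by case: Ggroup. Qed.
Lemma is_group_mul1g : left_id one mul. Proof. by case: Ggroup. Qed.
Lemma is_group_mulVg : left_inverse one inv mul. Proof. by case: Ggroup. Qed.

Lemma is_group_idem x : mul x x = x -> x = one.
Proof.
by move=> xx; rewrite -(is_group_mulVg x) -{3}xx is_group_mulgA is_group_mulVg is_group_mul1g.
Qed.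

Lemma is_group_mulgV : right_inverse one inv mul.
Proof.
move=> x; apply: is_group_idem.
by rewrite -is_group_mulgA (is_group_mulgA (inv x)) is_group_mulVg is_group_mul1g.
Qed.

Lemma is_group_mulg1 : right_id one mul.
Proof. by move=> x; rewrite -(is_group_mulVg x) is_group_mulgA is_group_mulgV is_group_mul1g. Qed.

End IsGroupTheory.

(* Classical equality and choice on W only serve to reuse MathComp's groupType theory. *)
HB.instance Definition _ (C : coxsys) := gen_eqMixin (cW C).
HB.instance Definition _ (C : coxsys) := gen_choiceMixin (cW C).
HB.instance Definition _ (C : coxsys) :=
  let G := cgroup C in
  isGroup.Build (cW C) (is_group_mulgA G) (is_group_mul1g G) (is_group_mulg1 G)
    (is_group_mulVg G) (is_group_mulgV G).

Lemma subseq_all (T : eqType) (P : pred T) (t s : seq T) :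
  subseq t s -> all P s -> all P t.
Proof. by move=> ts /allP sP; apply/allP => x /(mem_subseq ts)/sP. Qed.

Lemma subseq_cat_split (T : eqType) (t a b : seq T) : subseq t (a ++ b) ->
  exists a' b', [/\ t = a' ++ b', subseq a' a & subseq b' b].
Proof.
case/subseqP => m sm ->; exists (mask (take (size a) m) a), (mask (drop (size a) m) b).
rewrite !mask_subseq -mask_cat ?cat_take_drop //.
by rewrite size_takel // sm size_cat leq_addr.
Qed.

Section Coxeter.
Variable C : coxsys.
Local Notation W := (cW C).
Local Notation n := (rank C).
Local Notation word := (seq 'I_n).
Local Open Scope group_scope.
Implicit Types (x y z w : W) (s t : word) (I J : {set 'I_n}).

Lemma gen_square i : gen i * gen i = 1 :> W. Proof. exact: gen_invol. Qed.
Lemma invg_gen i : (gen i)^-1 = gen i :> W. Proof. exact: mulg1_eq (gen_square i). Qed.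
Lemma gen_mulK i x : gen i * (gen i * x) = x. Proof. by rewrite mulgA gen_square mul1g. Qed.
Lemma gen_mulKr i x : x * gen i * gen i = x. Proof. by rewrite -mulgA gen_square mulg1. Qed.

Lemma ev_nil : ev [::] = 1 :> W. Proof. by []. Qed.
Lemma ev_cons i s : ev (i :: s) = gen i * ev s. Proof. by []. Qed.
Lemma ev_cat s t : ev (s ++ t) = ev s * ev t.
Proof. by elim: s => [|i s IH]; rewrite ?mul1g // cat_cons !ev_cons IH mulgA. Qed.
Lemma ev_rcons s i : ev (rcons s i) = ev s * gen i.
Proof. by rewrite -cats1 ev_cat ev_cons mulg1. Qed.
Lemma ev_rev s : ev (rev s) = (ev s)^-1.
Proof.
elim: s => [|i s IH]; first by rewrite invg1.
by rewrite rev_cons ev_rcons IH ev_cons invgM invg_gen.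
Qed.

Lemma reduced_exists w : exists s, size s = clen w /\ ev s = w.
Proof. by rewrite /clen; case: ex_minnP => m /asboolP [s sw] _; exists s. Qed.

Lemma clen_ev_le s : clen (ev s) <= size s.
Proof. by rewrite /clen; case: ex_minnP => m _; apply; apply/asboolP; exists s. Qed.

Lemma clen1 : clen (1 : W) = 0.
Proof. by apply/eqP; rewrite -leqn0 -ev_nil clen_ev_le. Qed.

Lemma clen_eq0 w : clen w = 0 -> w = 1.
Proof. by have [[|i s] [<- <-]] := reduced_exists w. Qed.

Lemma clen_gen i : clen (gen i : W) = 1%N.
Proof.
apply/eqP; rewrite eqn_leq -[gen i]mulg1 (clen_ev_le [:: i]) lt0n mulg1.
by apply/eqP => /clen_eq0; apply: gen_neq1.
Qed.

Lemma clen_mul x y : clen (x * y) <= clen x + clen y.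
Proof.
have [s [<- <-]] := reduced_exists x; have [t [<- <-]] := reduced_exists y.
by rewrite -size_cat -ev_cat clen_ev_le.
Qed.

Lemma clen_inv w : clen w^-1 = clen w.
Proof.
suff le (w' : W) : clen w'^-1 <= clen w'.
  by apply/eqP; rewrite eqn_leq le -{1}[w]invgK le.
by have [s [<- <-]] := reduced_exists w'; rewrite -ev_rev -(size_rev s) clen_ev_le.
Qed.

Lemma clen_genl_le i w : clen (gen i * w) <= (clen w).+1.
Proof. by rewrite -add1n -(clen_gen i) clen_mul. Qed.

(* Subsets of W under symmetric difference, with W acting by conjugation. *)
Definition sdW := (W * (W -> bool))%type.

Definition sdmul (p q : sdW) : sdW := (p.1 * q.1, fun x => p.2 x (+) q.2 (x ^ p.1)).
Definition sdone : sdW := (1, fun=> false).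
Definition sdinv (p : sdW) : sdW := (p.1^-1, fun x => p.2 (x ^ p.1^-1)).

Lemma sd_is_group : is_group sdmul sdone sdinv.
Proof.
split=> [[a N] [b M] [c P]|[a N]|[a N]]; rewrite /sdmul /=; congr pair.
- exact: mulgA.
- by apply: funext => x; rewrite addbA conjgM.
- exact: mul1g.
- by apply: funext => x; rewrite conjg1.
- exact: mulVg.
- by apply: funext => x; rewrite addbb.
Qed.

Definition sd_gen i : sdW := (gen i, eq_op^~ (gen i)).

Lemma conjg_eqE x y z : (x ^ y == z) = (x == z ^ y^-1).
Proof. exact: can2_eq (conjgK y) (conjgKV y) x z. Qed.

Lemma sd_gen_square i : sdmul (sd_gen i) (sd_gen i) = sdone.
Proof.
rewrite /sdmul /=; congr pair; first exact: gen_square.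
by apply: funext => x /=; rewrite conjg_eqE invg_gen conjgE invg_gen gen_mulK addbb.
Qed.

Section DihedralRelation.
Variables i j : 'I_n.
Let a : W := gen i * gen j.

Lemma conjg_dihedral x m : (x ^ a == a ^+ m * gen i) = (x == a ^+ m.+2 * gen i).
Proof.
have sa : gen i * a^-1 = a * gen i by rewrite invgM !invg_gen mulgA.
by rewrite conjg_eqE conjgE invgK -[_ * _ / a]mulgA sa [a ^+ m * _]mulgA -expgSr mulgA -expgS.
Qed.

Lemma sd_gen_pow k : gpow sdmul sdone (sdmul (sd_gen i) (sd_gen j)) k =
  (a ^+ k, fun x => \big[addb/false]_(0 <= m < k.*2) (x == a ^+ m * gen i)).
Proof.
elim: k => [|k IH]; first by congr pair; apply: funext => x; rewrite big_geq.
rewrite /= IH /sdmul /= -expgS; congr pair; apply: funext => x.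
rewrite doubleS big_nat_recl // big_nat_recl // addbA expg0 mul1g expg1.
rewrite conjg_eqE invg_gen conjgE invg_gen mulgA.
by congr (_ (+) _ (+) _); apply: eq_bigr => m _; apply: conjg_dihedral.
Qed.

(* If a ^+ k = 1, the terms a ^+ m * gen i, m < 2k, repeat with period k and cancel. *)
Lemma sd_gen_rel k : gpow (@cmul C) (cone C) (cmul (gen i) (gen j)) k = cone C ->
  gpow sdmul sdone (sdmul (sd_gen i) (sd_gen j)) k = sdone.
Proof.
have -> : gpow (@cmul C) (cone C) (cmul (gen i) (gen j)) k = a ^+ k.
  by elim: k => //= k ->; rewrite expgS.
move=> ak1; rewrite sd_gen_pow ak1; congr pair; apply: funext => x.
rewrite -addnn (@big_cat_nat _ _ _ k) ?leq_addr //= -{2}(add0n k) big_addn addnK.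
by under [X in _ (+) X]eq_bigr do rewrite expgnDr ak1 mulg1; rewrite addbb.
Qed.

End DihedralRelation.

Definition sd_hom : W -> sdW :=
  projT1 (cid (presentation sd_is_group sd_gen_square sd_gen_rel)).

Lemma sd_hom_spec :
  (forall x y, sd_hom (x * y) = sdmul (sd_hom x) (sd_hom y)) /\
  (forall i, sd_hom (gen i) = sd_gen i).
Proof. exact: projT2 (cid (presentation sd_is_group sd_gen_square sd_gen_rel)). Qed.

Lemma sd_homM x y : sd_hom (x * y) = sdmul (sd_hom x) (sd_hom y).
Proof. exact: sd_hom_spec.1. Qed.

Lemma sd_hom_gen i : sd_hom (gen i) = sd_gen i.
Proof. exact: sd_hom_spec.2. Qed.

Lemma sd_hom1 : sd_hom 1 = sdone.
Proof. by apply: (is_group_idem sd_is_group); rewrite -sd_homM mulg1. Qed.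

Definition refl_cocycle w : W -> bool := (sd_hom w).2.

Fixpoint word_cocycle s : W -> bool :=
  if s is i :: s' then fun x => (x == gen i) (+) word_cocycle s' (x ^ gen i)
  else fun=> false.

Lemma refl_cocycle_ev s : refl_cocycle (ev s) = word_cocycle s.
Proof.
suff homE : sd_hom (ev s) = (ev s, word_cocycle s) by rewrite /refl_cocycle homE.
elim: s => [|i s IH]; first exact: sd_hom1.
by rewrite ev_cons sd_homM IH sd_hom_gen.
Qed.

Lemma refl_cocycle_gen i w : refl_cocycle (gen i * w) (gen i) = ~~ refl_cocycle w (gen i).
Proof. by rewrite /refl_cocycle sd_homM sd_hom_gen /= eqxx conjgE invg_gen gen_mulK. Qed.

Lemma word_cocycle_exchange s x : word_cocycle s x ->
  exists t, [/\ subseq t s, size t < size s & ev t = x * ev s].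
Proof.
elim: s x => [//|i s IH] x; rewrite [word_cocycle _ x]/=.
case: eqP => [-> _|_ /IH [t [ts lt et]]].
  by exists s; rewrite subseq_cons ltnSn ev_cons gen_mulK.
by exists (i :: t); rewrite !ev_cons et conjgE -!mulgA mulVKg /= eqxx ts ltnS lt.
Qed.

Lemma clen_genl_lt i w : refl_cocycle w (gen i) -> clen (gen i * w) < clen w.
Proof.
have [s [<- <-]] := reduced_exists w; rewrite refl_cocycle_ev.
by case/word_cocycle_exchange => t [_ lt <-]; apply: leq_ltn_trans (clen_ev_le t) lt.
Qed.

Lemma clen_genl_gt i w : ~~ refl_cocycle w (gen i) -> clen w < clen (gen i * w).
Proof. by rewrite -refl_cocycle_gen => /clen_genl_lt; rewrite gen_mulK. Qed.

Lemma clen_genl i w : clen (gen i * w) = (clen w).+1 \/ clen w = (clen (gen i * w)).+1.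
Proof.
have le1 := clen_genl_le i w; have le2 := clen_genl_le i (gen i * w); rewrite gen_mulK in le2.
case: (boolP (refl_cocycle w (gen i))) => [/clen_genl_lt|/clen_genl_gt] lt; [right|left];
  by apply/eqP; rewrite eqn_leq ?le1 ?le2 lt.
Qed.

Lemma left_exchange i s : clen (gen i * ev s) < clen (ev s) ->
  exists t, [/\ subseq t s, size t < size s & ev t = gen i * ev s].
Proof.
move=> lt; apply: word_cocycle_exchange; rewrite -refl_cocycle_ev.
by apply: contraLR lt => /clen_genl_gt; rewrite -leqNgt => /ltnW.
Qed.

Lemma right_exchange i s : clen (ev s * gen i) < clen (ev s) ->
  exists t, [/\ subseq t s, size t < size s & ev t = ev s * gen i].
Proof.
rewrite -clen_inv -[clen (ev s)]clen_inv invgM invg_gen -ev_rev => /left_exchange.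
case=> t [ts lt et]; exists (rev t).
by rewrite -subseq_rev revK ts size_rev -(size_rev s) lt ev_rev et ev_rev invgM invgK invg_gen.
Qed.

Lemma clen_genr i w : clen (w * gen i) = (clen w).+1 \/ clen w = (clen (w * gen i)).+1.
Proof. by rewrite -clen_inv -[clen w]clen_inv invgM invg_gen; apply: clen_genl. Qed.

Lemma reduced_subseq s : exists t, [/\ subseq t s, ev t = ev s & size t = clen (ev s)].
Proof.
elim/last_ind: s => [|s i [t [ts et red]]]; first by exists [::]; rewrite clen1.
rewrite ev_rcons -et in red *; case: (clen_genr i (ev t)) => len.
  by exists (rcons t i); rewrite ev_rcons size_rcons len red -!cats1 subseq_cat2r ts.
have [|t' [t't lt et']] := @right_exchange i t; first by rewrite len.
exists t'; split=> //; first exact: subseq_trans t't (subseq_trans ts (subseq_rcons s i)).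
by apply/eqP; rewrite eqn_leq -{2}et' clen_ev_le andbT -ltnS -len -red.
Qed.

Lemma reduced_rcons s i : size (rcons s i) = clen (ev (rcons s i)) -> size s = clen (ev s).
Proof.
rewrite size_rcons ev_rcons => red; apply/eqP; rewrite eqn_leq clen_ev_le /=.
by rewrite -ltnS red -addn1 -(clen_gen i) clen_mul.
Qed.

Lemma inWI1 I : inWI I 1.
Proof. by exists [::]. Qed.

Lemma inWI_gen I i : i \in I -> inWI I (gen i).
Proof. by exists [:: i]; rewrite ev_cons mulg1 /= andbT. Qed.

Lemma inWI_mul I x y : inWI I x -> inWI I y -> inWI I (x * y).
Proof. by move=> [s [sI <-]] [t [tI <-]]; exists (s ++ t); rewrite all_cat sI tI ev_cat. Qed.

Lemma inWI_inv I x : inWI I x -> inWI I x^-1.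
Proof. by move=> [s [sI <-]]; exists (rev s); rewrite all_rev sI ev_rev. Qed.

Lemma inWI_subset I J x : I \subset J -> inWI I x -> inWI J x.
Proof. by move=> /subsetP IJ [s [/allP sI <-]]; exists s; split=> //; apply/allP => i /sI/IJ. Qed.

Lemma inWI_reduced I x : inWI I x ->
  exists s, [/\ all (fun i => i \in I) s, ev s = x & size s = clen x].
Proof.
move=> [s [sI <-]]; have [t [ts <- red]] := reduced_subseq s.
by exists t; split=> //; apply: subseq_all ts sI.
Qed.

Lemma inXIP I x : inXI I x <-> forall i, i \in I -> clen x < clen (x * gen i).
Proof. by []. Qed.

Lemma is_par_compP I w x : is_par_comp I w x <-> inWI I x /\ inXI I (w / x).
Proof. by []. Qed.

Section ParabolicComponent.
Variable I : {set 'I_n}.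

(* Induct on a reduced word b of y, with a reduced for x0.  If x0 b s were shorter
   than x0 b, exchange would delete a letter of a ++ b: a deletion in b contradicts
   the reducedness of b s, one in a yields a shorter element of x0 W_I. *)
Lemma min_coset_clenD x0 : (forall z, inWI I z -> clen x0 <= clen (x0 * z)) ->
  forall y, inWI I y -> clen (x0 * y) = clen x0 + clen y.
Proof.
move=> x0_min y /inWI_reduced [b [bI <- red]]; rewrite -red.
elim/last_ind: b bI red => [|b i IH]; first by rewrite mulg1 addn0.
rewrite all_rcons => /andP [iI bI] red.
rewrite ev_rcons mulgA size_rcons addnS -(IH bI (reduced_rcons red)).
case: (clen_genr i (x0 * ev b)) => // len; exfalso.
have [a [sa ea]] := reduced_exists x0.
have [|t [tab lt et]] := @right_exchange i (a ++ b); first by rewrite ev_cat ea len.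
have [a' [b' [tE a'a b'b]]] := subseq_cat_split tab.
rewrite tE !ev_cat ea in et; rewrite tE !size_cat in lt.
have [eq_a'|neq_a'] := eqVneq a' a.
  subst a'; rewrite ea -mulgA in et; have := clen_ev_le b'.
  rewrite (mulgI _ _ _ et) -ev_rcons -red size_rcons; lia.
have lt_a' : size a' < size a by rewrite (ltn_leqif (size_subseq_leqif a'a)).
have bI' : inWI I (ev b) by exists b.
have b'I : inWI I (ev b') by exists b'; rewrite (subseq_all b'b bI).
have zI := inWI_mul (inWI_mul bI' (inWI_gen iI)) (inWI_inv b'I).
have := x0_min _ zI; rewrite !mulgA -et mulgK leqNgt -sa.
by rewrite (leq_ltn_trans (clen_ev_le a')).
Qed.

Lemma exists_min_coset x : exists2 z, inWI I z &
  forall z', inWI I z' -> clen (x * z) <= clen (x * z * z').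
Proof.
have ex : exists k, `[< exists z, inWI I z /\ clen (x * z) = k >].
  by exists (clen (x * 1)); apply/asboolP; exists 1; split=> //; apply: inWI1.
case: (ex_minnP ex) => k /asboolP [z [zI <-]] min_k; exists z => // z' z'I.
by rewrite -mulgA; apply: min_k; apply/asboolP; exists (z * z'); split=> //; apply: inWI_mul.
Qed.

(* x z is the shortest element of x W_I; if z <> 1, the last letter of a reduced word
   of z^-1 would make x longer than x * gen i. *)
Lemma inXI_clenD x y : inXI I x -> inWI I y -> clen (x * y) = clen x + clen y.
Proof.
move=> /inXIP xX yI; have [z zI /min_coset_clenD x0D] := exists_min_coset x.
suff xz : x * z = x by rewrite -xz x0D.
have [b [bI eb red]] := inWI_reduced (inWI_inv zI).
case/lastP: b bI eb red => [|b i] bI eb red; first by rewrite -[z]invgK -eb ev_nil invg1 mulg1.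
move: bI; rewrite all_rcons => /andP [iI bI]; exfalso.
have xD : clen x = clen (x * z) + (size b).+1.
  by rewrite -(size_rcons b i) red -x0D ?mulgK //; apply: inWI_inv.
have xiE : x * gen i = x * z * ev b.
  by rewrite -[z]invgK -eb ev_rcons invgM invg_gen mulgA mulgVK.
have := xX i iI; rewrite xiE x0D; last by exists b.
by have := clen_ev_le b; lia.
Qed.

Lemma par_comp_exists w : exists x, is_par_comp I w x.
Proof.
have [z zI z_min] := exists_min_coset w; exists z^-1.
apply/is_par_compP; split; first exact: inWI_inv.
apply/inXIP => i iI; rewrite invgK.
by have := z_min _ (inWI_gen iI); case: (clen_genr i (w * z)) => ->; rewrite ?ltnSn ?ltnn.
Qed.

Lemma par_comp_uniq w x y : is_par_comp I w x -> is_par_comp I w y -> x = y.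
Proof.
move=> /is_par_compP [xI xX] /is_par_compP [yI yX].
have zI : inWI I (x / y) by apply: inWI_mul (inWI_inv yI).
have l1 := inXI_clenD xX zI; have l2 := inXI_clenD yX (inWI_inv zI).
rewrite mulgA mulgVK in l1; rewrite invgF mulgA mulgVK -[y / x]invgF clen_inv in l2.
apply/eqP; rewrite -divg_eq1; apply/eqP/clen_eq0; move: l1.
by rewrite l2 -addnA -[X in X = _]addn0 => /addnI/esym/eqP; rewrite addn_eq0 => /andP [/eqP].
Qed.

Lemma par_compP w : is_par_comp I w (par_comp I w).
Proof.
by rewrite /par_comp; case: pselect => [ex|[]]; [case: (cid ex) | apply: par_comp_exists].
Qed.

Lemma par_comp_eq w x : is_par_comp I w x -> par_comp I w = x.
Proof. exact: par_comp_uniq (par_compP w). Qed.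

Lemma par_comp_id x : inWI I x -> par_comp I x = x.
Proof.
move=> xI; apply: par_comp_eq; apply/is_par_compP; split=> //.
by apply/inXIP => i _; rewrite mulgV mul1g clen1 clen_gen.
Qed.

End ParabolicComponent.

Lemma suppP i w : i \in supp w <-> exists s, [/\ ev s = w, size s = clen w & i \in s].
Proof.
rewrite inE; split=> [/asboolP [s [[es red] si]]|[s [es red si]]]; first by exists s.
by apply/asboolP; exists s.
Qed.

Lemma reduced_all_inWI I s : size s = clen (ev s) -> inWI I (ev s) -> all (fun i => i \in I) s.
Proof.
elim/last_ind: s => [//|s i IH] red sI; have sred := reduced_rcons red.
move: red sI; rewrite size_rcons ev_rcons => red siI.
have [t [tI et _]] := inWI_reduced siI.
have [|t' [t't _ et']] := @right_exchange i t; first by rewrite et gen_mulKr -red -sred.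
have sI : inWI I (ev s) by exists t'; rewrite (subseq_all t't tI) et' et gen_mulKr.
rewrite all_rcons (IH sred sI) andbT.
have gI : inWI I (gen i) by have := inWI_mul (inWI_inv sI) siI; rewrite mulKg.
have [[|j [|k b]] [bI eb lb]] := inWI_reduced gI; rewrite clen_gen in lb => //.
by move: bI eb; rewrite ev_cons ev_nil mulg1 /= andbT => jI /gen_inj <-.
Qed.

Lemma subset_suppP I x : supp x \subset I <-> inWI I x.
Proof.
split=> [sxI|xI].
  have [s [red es]] := reduced_exists x; apply: inWI_subset sxI _.
  by exists s; rewrite es; split=> //; apply/allP => i si; apply/suppP; exists s.
apply/subsetP => i /suppP [s [es red si]]; rewrite -es in xI red.
by move: xI => /(reduced_all_inWI red)/allP; apply.
Qed.

Lemma supp_par_comp I v : supp (par_comp I v) \subset supp v.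
Proof.
have /is_par_compP [aI aX] := par_compP I v; set a := par_comp I v in aI aX *.
have vD := inXI_clenD aX aI; rewrite mulgVK in vD.
apply/subsetP => i /suppP [b [eb red ib]]; have [s [ls es]] := reduced_exists (v / a).
by apply/suppP; exists (s ++ b); rewrite ev_cat es eb mulgVK size_cat ls red vD mem_cat ib orbT.
Qed.

Lemma supp_par_comp_subset I v : supp (par_comp I v) \subset I.
Proof. by apply/subset_suppP; case/is_par_compP: (par_compP I v). Qed.

Lemma par_comp_comp I J v : I \subset J -> par_comp I (par_comp J v) = par_comp I v.
Proof.
move=> IJ; have /is_par_compP [bJ bX] := par_compP J v; set b := par_comp J v in bJ bX *.
have /is_par_compP [dI dX] := par_compP I b; set d := par_comp I b in dI dX *.
symmetry; apply: par_comp_eq; apply/is_par_compP; split=> //; apply/inXIP => i iI.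
have vE : v / d = v / b * (b / d) by rewrite mulgA mulgVK.
have bdJ : inWI J (b / d) by apply: inWI_mul bJ (inWI_inv (inWI_subset IJ dI)).
have bdiJ : inWI J (b / d * gen i) by apply: inWI_mul bdJ (inWI_gen (subsetP IJ i iI)).
by rewrite vE (inXI_clenD bX bdJ) -mulgA (inXI_clenD bX bdiJ) ltn_add2l; apply: (dX i iI).
Qed.

Lemma cle_supp x y : cle x y -> supp x \subset supp y.
Proof. by rewrite /cle => <-; apply: supp_par_comp. Qed.

Lemma cle_par_comp I y v : cle y v -> supp y \subset I -> cle y (par_comp I v).
Proof. by rewrite /cle => yv yI; rewrite par_comp_comp. Qed.

Lemma cle_of_supp x y v : cle x v -> cle y v -> supp x \subset supp y -> cle x y.
Proof. by rewrite /cle => xv yv xy; rewrite -{1}yv par_comp_comp. Qed.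

Lemma par_comp_cle I v : cle (par_comp I v) v.
Proof.
rewrite /cle -(par_comp_comp v (supp_par_comp_subset I v)) par_comp_id //.
exact/subset_suppP.
Qed.

Lemma cle_trans x y v : cle x y -> cle y v -> cle x v.
Proof. by rewrite /cle => xy yv; rewrite -(par_comp_comp v (cle_supp xy)) yv xy. Qed.

Section IntervalLattice.
Variables u v w g : W.
Hypotheses (uwv : in_interval u v w) (ugv : in_interval u v g).

Lemma join_in_interval (j := par_comp (supp w :|: supp g) v) :
  [/\ in_interval u v j, is_lub_in u v w g j & supp j = supp w :|: supp g].
Proof.
case: uwv ugv => [uw wv] [ug gv].
have wj : cle w j := cle_par_comp wv (subsetUl _ _).
have gj : cle g j := cle_par_comp gv (subsetUr _ _).
have Sj : supp j = supp w :|: supp g.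
  apply/eqP; rewrite eqEsubset supp_par_comp_subset.
  by rewrite subUset (cle_supp wj) (cle_supp gj).
have ij : in_interval u v j by split; [apply: cle_trans uw wj | apply: par_comp_cle].
split=> //; split=> // y [_ yv] wy gy; apply: cle_of_supp (par_comp_cle _ _) yv _.
by rewrite Sj subUset (cle_supp wy) (cle_supp gy).
Qed.

Lemma meet_in_interval (m := par_comp (supp w :&: supp g) v) :
  [/\ in_interval u v m, is_glb_in u v w g m & supp m \subset supp w :&: supp g].
Proof.
case: uwv ugv => [uw wv] [ug gv].
have mS : supp m \subset supp w :&: supp g := supp_par_comp_subset _ _.
have mv : cle m v := par_comp_cle _ _.
have im : in_interval u v m.
  split=> //; apply: cle_par_comp (cle_trans uw wv) _.
  by rewrite subsetI (cle_supp uw) (cle_supp ug).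
split=> //; split=> //.
- exact: cle_of_supp mv wv (subset_trans mS (subsetIl _ _)).
- exact: cle_of_supp mv gv (subset_trans mS (subsetIr _ _)).
- move=> y [_ yv] yw yg; apply: cle_par_comp yv _.
  by rewrite subsetI (cle_supp yw) (cle_supp yg).
Qed.

End IntervalLattice.

End Coxeter.

Theorem mainTheorem8 (C : coxsys) (u v w g : cW C) :
  clt u v -> in_interval u v w -> in_interval u v g ->
  (let j := par_comp (supp w :|: supp g) v in
     [/\ in_interval u v j, is_lub_in u v w g j & supp j = supp w :|: supp g]) /\
  (let m := par_comp (supp w :&: supp g) v in
     [/\ in_interval u v m, is_glb_in u v w g m & supp m \subset supp w :&: supp g]).
Proof. by move=> _ uwv ugv; split; [apply: join_in_interval | apply: meet_in_interval]. Qed.
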